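(* Let $f:X\to X$ be a measurable map, $Y\subset X$ measurable, $\tau:Y\to\mathbb Z^+$ integrable with respect to a probability measure $\mu_Y$ on $Y$ that is invariant under $F:Y\to Y$, $F(y)=f^{\tau(y)}y$. Let $\bar\tau=\int_Y\tau\,d\mu_Y$, $\mu^\tau=(\mu_Y\times\text{counting})/\bar\tau$ on $Y^\tau=\{(y,\ell)\in Y\times\mathbb Z:0\le\ell\le\tau(y)-1\}$, and $\mu_X=\pi_*\mu^\tau$ where $\pi(y,\ell)=f^\ell y$. Let $h:X\to(0,\infty)$ be measurable and $H(y)=\sum_{\ell=0}^{\tau(y)-1}h(f^\ell y)$. Then \[ \mu_Y(H>t)\le\mu_Y(\tau>n)+\bar\tau\,\mu_X(h>t/n)\quad\text{for all }n\ge1,\ t>1. \] *)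

From HB Require Import structures.
From mathcomp Require Import all_boot all_order all_algebra.
From mathcomp Require Import all_classical all_reals all_analysis.
Set Implicit Arguments. Unset Strict Implicit. Unset Printing Implicit Defensive.
Import Order.TTheory GRing.Theory Num.Theory.
Import numFieldNormedType.Exports.
Local Open Scope classical_set_scope.
Local Open Scope ring_scope.

Section Tower.
Context {d : measure_display} {X : measurableType d} {R : realType}.

Definition first_return (f : X -> X) (tau : X -> nat) (y : X) : X :=
  iter (tau y) f y.

Definition tau_bar (muY : probability X R) (Y : set X) (tau : X -> nat) : \bar R :=
  (\int[muY]_(y in Y) ((tau y)%:R)%:E)%E.

Definition induced_sum (f : X -> X) (tau : X -> nat) (h : X -> R) (y : X) : R :=
  \sum_(0 <= l < tau y) h (iter l f y).

(* mu_X = pi_* mu^tau, with mu^tau = (mu_Y x counting)/tau_bar on the tower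
   Y^tau = {(y,l) : y in Y, 0 <= l <= tau y - 1} and pi(y,l) = f^l y. *)
Definition tower_pushforward (muY : probability X R) (Y : set X) (f : X -> X)
  (tau : X -> nat) (A : set X) : \bar R :=
  ((\sum_(0 <= l <oo) muY [set y | Y y /\ (l < tau y)%N /\ A (iter l f y)])
     * ((fine (tau_bar muY Y tau))^-1)%:E)%E.

End Tower.

From HB Require Import structures.
From mathcomp Require Import all_boot all_order all_algebra.
From mathcomp Require Import all_classical all_reals all_analysis.
From mathcomp Require Import measurable_realfun.
Set Implicit Arguments.
Unset Strict Implicit.
Unset Printing Implicit Defensive.

Import Order.TTheory GRing.Theory Num.Theory.
Import numFieldNormedType.Exports.
Local Open Scope classical_set_scope.
Local Open Scope ring_scope.

(* If [H y > t] while [tau y <= n], one of the at most [n] summands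
   [h (f^l y)], [l < tau y], exceeds [t / n].  So [{H > t}] is covered by
   [{tau > n}] and the sets [B_l = {y | l < tau y, h (f^l y) > t / n}], and
   countable subadditivity bounds [muY {H > t}] by
   [muY {tau > n} + \sum_l muY B_l]; that series is [tau_bar * mu_X {h > t/n}]
   by definition of [mu_X]. *)

Lemma sum_le_of_terms_le_div (R : realFieldType) (a : nat -> R) (k n : nat) (t : R) :
  (0 < n)%N -> (k <= n)%N -> 0 <= t ->
  (forall l, (l < k)%N -> a l <= t / n%:R) -> \sum_(0 <= l < k) a l <= t.
Proof.
move=> n_gt0 kn t_ge0 a_le.
apply: (@le_trans _ _ (\sum_(0 <= l < k) (t / n%:R))).
  by apply: ler_sum_nat => l /andP[_]; exact: a_le.
rewrite sumr_const_nat subn0 -[_ *+ k]mulr_natr.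
apply: (@le_trans _ _ (t / n%:R * n%:R)); last by rewrite divfK // pnatr_eq0 -lt0n.
by rewrite ler_wpM2l ?ler_nat // divr_ge0.
Qed.

Lemma measure_le_union_bound d (T : measurableType d) (R : realType)
    (mu : {measure set T -> \bar R}) (S A : set T) (B : nat -> set T) :
  measurable S -> measurable A -> (forall l, measurable (B l)) ->
  S `<=` A `|` \bigcup_l B l ->
  (mu S <= mu A + \sum_(0 <= l <oo) mu (B l))%E.
Proof.
move=> mS mA mB SAB.
have mUB : measurable (\bigcup_l B l) by exact: bigcupT_measurable.
apply: (le_trans (le_measure mu _ _ SAB)); rewrite ?inE //; first exact: measurableU.
apply: (le_trans (measureU2 mu mA mUB)).
by rewrite leeD2l // measure_sigma_subadditive.
Qed.

Section measurability.
Context d (T : measurableType d) (R : realType).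

Lemma measurable_fun_iter (f : T -> T) n :
  measurable_fun setT f -> measurable_fun setT (iter n f).
Proof.
move=> mf; elim: n => [|n IHn]; first exact: measurable_id.
by rewrite (_ : iter n.+1 f = f \o iter n f); [exact: measurableT_comp|].
Qed.

Lemma measurable_gtr (g : T -> R) (c : R) :
  measurable_fun setT g -> measurable [set x | c < g x].
Proof.
move=> mg; rewrite (_ : [set x | c < g x] = setT `&` g @^-1` `]c, +oo[).
  exact: mg (measurable_itv _).
by rewrite setTI; apply/seteqP; split => x /=; rewrite in_itv /= andbT.
Qed.

Lemma measurable_cst_set (P : Prop) : measurable [set _ : T | P].
Proof.
case: (pselect P) => [p|np].
  by rewrite (_ : [set _ | P] = setT) //; apply/seteqP; split.
by rewrite (_ : [set _ | P] = set0) //; apply/seteqP; split.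
Qed.

Variables (D : set T) (tau : T -> nat).
Hypotheses (mD : measurable D) (mtau : measurable_fun D (fun x => (tau x)%:R : R)).

Lemma measurable_level_set k : measurable [set x | D x /\ tau x = k].
Proof.
rewrite (_ : [set x | D x /\ tau x = k] = D `&` (fun x => (tau x)%:R : R) @^-1` [set k%:R]).
  exact: mtau.
apply/seteqP; split => x /= [Dx tx]; split => //; first by rewrite tx.
by apply/eqP; rewrite -(eqr_nat R) tx.
Qed.

Lemma measurable_set_at_level (Q : nat -> set T) :
  (forall k, measurable (Q k)) -> measurable [set x | D x /\ Q (tau x) x].
Proof.
move=> mQ.
rewrite (_ : [set x | D x /\ Q (tau x) x] = \bigcup_k ([set x | D x /\ tau x = k] `&` Q k)).
  by apply: bigcupT_measurable => k; apply: measurableI; [exact: measurable_level_set|].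
apply/seteqP; split => x /=; first by move=> [Dx Qx]; exists (tau x).
by move=> [k _ [[Dx <-] Qx]].
Qed.

End measurability.

Section tower.
Context d (X : measurableType d) (R : realType).
Variables (f : X -> X) (Y : set X) (tau : X -> nat).

Lemma induced_sum_gt_subset (h : X -> R) (n : nat) (t : R) :
  (0 < n)%N -> 0 <= t ->
  [set y | Y y /\ t < induced_sum f tau h y] `<=`
  [set y | Y y /\ (n < tau y)%N] `|`
  \bigcup_l [set y | Y y /\ (l < tau y)%N /\ [set x | t / n%:R < h x] (iter l f y)].
Proof.
move=> n_gt0 t_ge0 y [Yy Hy].
have [n_lt_tau|tau_le_n] := ltnP n (tau y); [by left | right].
apply: contrapT => noB.
have : induced_sum f tau h y <= t.
  apply: (sum_le_of_terms_le_div (n := n)) => // l l_lt; rewrite leNgt; apply/negP => hl.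
  by apply: noB; exists l.
by rewrite leNgt Hy.
Qed.

Hypotheses (mf : measurable_fun setT f) (mY : measurable Y)
  (mtau : measurable_fun Y (fun y => (tau y)%:R : R)).

Lemma measurable_return_time_gt n : measurable [set y | Y y /\ (n < tau y)%N].
Proof.
apply: (measurable_set_at_level mY mtau (Q := fun k => [set _ | (n < k)%N])) => k.
exact: measurable_cst_set.
Qed.

Lemma measurable_visit l (A : set X) :
  measurable A -> measurable [set y | Y y /\ (l < tau y)%N /\ A (iter l f y)].
Proof.
move=> mA.
apply: (measurable_set_at_level mY mtau
  (Q := fun k => [set _ | (l < k)%N] `&` (iter l f @^-1` A))) => k.
apply: measurableI; first exact: measurable_cst_set.
by rewrite -[_ @^-1` _]setTI; exact: measurable_fun_iter.
Qed.

Lemma measurable_induced_sum_gt (h : X -> R) (t : R) :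
  measurable_fun setT h -> measurable [set y | Y y /\ t < induced_sum f tau h y].
Proof.
move=> mh.
apply: (measurable_set_at_level mY mtau
  (Q := fun k => [set y | t < \sum_(0 <= l < k) h (iter l f y)])) => k.
apply: measurable_gtr; apply: measurable_sum => l.
by apply: measurableT_comp => //; exact: measurable_fun_iter.
Qed.

End tower.

Section mean_return_time.
Context d (X : measurableType d) (R : realType).
Variables (muY : probability X R) (Y : set X) (tau : X -> nat).

Lemma tau_bar_ge1 : measurable Y -> muY Y = 1%E ->
  (forall y, Y y -> (0 < tau y)%N) ->
  muY.-integrable Y (fun y => ((tau y)%:R)%:E) ->
  (1 <= tau_bar muY Y tau)%E.
Proof.
move=> mY muY1 tau_gt0 /measurable_int mtau.
rewrite /tau_bar -muY1 -[muY Y]mul1e -(integral_cst muY mY).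
by apply: ge0_le_integral => // y Yy; rewrite lee_fin ler1n tau_gt0.
Qed.

Lemma tau_bar_mul_tower_pushforward (f : X -> X) (A : set X) :
  tau_bar muY Y tau \is a fin_num -> tau_bar muY Y tau != 0%E ->
  (tau_bar muY Y tau * tower_pushforward muY Y f tau A =
   \sum_(0 <= l <oo) muY [set y | Y y /\ (l < tau y)%N /\ A (iter l f y)])%E.
Proof.
rewrite /tower_pushforward; case: (tau_bar muY Y tau) => // r _ r_neq0.
by rewrite /= muleCA -EFinM divff ?mule1 // -(@eqe r).
Qed.

End mean_return_time.

Theorem propositionA1 (d : measure_display) (X : measurableType d) (R : realType)
  (f : X -> X) (Y : set X) (tau : X -> nat) (muY : probability X R) (h : X -> R) :
  measurable_fun setT f ->
  measurable Y ->
  muY Y = 1%E ->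
  (forall y, Y y -> (0 < tau y)%N) ->
  muY.-integrable Y (fun y => ((tau y)%:R)%:E) ->
  (forall y, Y y -> Y (first_return f tau y)) ->
  (forall A, measurable A -> A `<=` Y ->
     muY (Y `&` (first_return f tau) @^-1` A) = muY A) ->
  measurable_fun setT h ->
  (forall x, 0 < h x) ->
  forall (n : nat) (t : R), (1 <= n)%N -> 1 < t ->
    (muY [set y | Y y /\ (t < induced_sum f tau h y)%R]
     <= muY [set y | Y y /\ (n < tau y)%N]
        + tau_bar muY Y tau
          * tower_pushforward muY Y f tau [set x | (t / n%:R < h x)%R])%E.
Proof.
move=> mf mY muY1 tau_gt0 itau _ _ mh _ n t n_gt0 t_gt1.
have mtau : measurable_fun Y (fun y => (tau y)%:R : R).
  by apply/measurable_EFinP; exact: measurable_int itau.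
have one_le_tau_bar := tau_bar_ge1 mY muY1 tau_gt0 itau.
rewrite tau_bar_mul_tower_pushforward; first last.
- by rewrite gt_eqF // (lt_le_trans _ one_le_tau_bar).
- exact: integrable_fin_num.
have mS := measurable_induced_sum_gt mf mY mtau t mh.
have mA := measurable_return_time_gt mY mtau n.
have mB l := measurable_visit mf mY mtau l (measurable_gtr (t / n%:R) mh).
apply: (measure_le_union_bound muY mS mA mB).
by apply: induced_sum_gt_subset => //; rewrite (le_trans ler01) ?ltW.
Qed.
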